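(* Let $(M,d)$ be a compact metric space, $\varphi:M\to M$ continuous and $\mathcal G=\{G_n\}\in\mathcal A(M)$. Then $$\lim_{\delta\downarrow0}\limsup_{n\to\infty}\sup_{x\in M}\sup_{y,z\in B_n(x,\delta)}\tfrac1n|G_n(y)-G_n(z)|=0.$$ Moreover, if integers $m_\delta(n)\in\{0,\dots,n-1\}$ satisfy $\lim_{\delta\downarrow0}\limsup_{n}\frac1nm_\delta(n)=0$, then $$\lim_{\delta\downarrow0}\limsup_{n}\tfrac1n\|G_{n-m_\delta(n)}-G_n\|_\infty=0,\qquad \lim_{\delta\downarrow0}\limsup_{n}\sup_{x\in M}\sup_{y,z\in B_{n-m_\delta(n)}(x,\delta)}\tfrac1n|G_n(y)-G_n(z)|=0.$$
   Context: $C(M),B(M)$: continuous/bounded Borel real functions with sup norm; $S_nG=\sum_{k<n}G\circ\varphi^k$; $B_n(x,\delta)=\{y:d(\varphi^ky,\varphi^kx)<\delta,\ 0\le k\le n-1\}$. $\mathcal A(M)$: sequences $\{G_n\}\subset B(M)$ for which some $\{G^{(k)}\}\subset C(M)$ has $\lim_k\limsup_nn^{-1}\|G_n-S_nG^{(k)}\|_\infty=0$. *)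

From HB Require Import structures.
From mathcomp Require Import all_boot all_order all_algebra.
From mathcomp Require Import all_classical all_reals all_analysis.
Set Implicit Arguments. Unset Strict Implicit. Unset Printing Implicit Defensive.
Import Order.TTheory GRing.Theory Num.Theory.
Import numFieldNormedType.Exports.
Local Open Scope classical_set_scope.
Local Open Scope ring_scope.

Definition is_metric_for {R : realType} {M : pseudoMetricType R} (d : M -> M -> R) :=
  [/\ (forall x y, 0 <= d x y), (forall x y, d x y = 0 <-> x = y),
      (forall x y, d x y = d y x), (forall x y z, d x z <= d x y + d y z)
    & (forall (x : M) (e : R) (y : M), ball x e y <-> d x y < e)].

Definition borel_set {M : topologicalType} (A : set M) : Prop := <<s open >> A.

Definition bounded_borel {R : realType} {M : topologicalType} (f : M -> R) : Prop :=
  (exists C : R, forall x, `|f x| <= C) /\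
  (forall B : set R, measurable B -> borel_set (f @^-1` B)).

Definition supnorm {R : realType} {M : Type} (f : M -> R) : \bar R :=
  ereal_sup [set (`|f x|)%:E | x in [set: M]].

Definition birkhoff {R : realType} {M : Type} (phi : M -> M) (n : nat) (G : M -> R) : M -> R :=
  fun x => \sum_(k < n) G (iter k phi x).

Definition bowen_ball {R : realType} {M : Type} (d : M -> M -> R) (phi : M -> M)
  (n : nat) (x : M) (delta : R) : set M :=
  [set y | forall k : nat, (k < n)%N -> d (iter k phi y) (iter k phi x) < delta].

Definition class_A {R : realType} {M : pseudoMetricType R} (phi : M -> M)
  (G : nat -> M -> R) : Prop :=
  (forall n, bounded_borel (G n)) /\
  exists Gk : nat -> M -> R, (forall k, continuous (Gk k)) /\
    (fun k => limn_esup (fun n : nat =>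
        ((n%:R^-1)%:E * supnorm (fun x => G n x - birkhoff phi n (Gk k) x)%R)%E))
      @ \oo --> 0%E.

Definition bowen_osc {R : realType} {M : Type} (d : M -> M -> R) (phi : M -> M)
  (G : nat -> M -> R) (n p : nat) (delta : R) : \bar R :=
  ereal_sup [set ((n%:R^-1) * `|G n yz.1 - G n yz.2|)%:E | yz in
     [set yz : M * M | exists x, bowen_ball d phi p x delta yz.1 /\
                                 bowen_ball d phi p x delta yz.2]].

From HB Require Import structures.
From mathcomp Require Import all_boot all_order all_algebra.
From mathcomp Require Import all_classical all_reals all_analysis.
From mathcomp Require Import lra ring zify.
Import Order.TTheory GRing.Theory Num.Theory.
Import numFieldNormedType.Exports.
Local Open Scope classical_set_scope.
Local Open Scope ring_scope.

(* Fix a continuous g whose Birkhoff sums S_n g approximate G_n within n*eps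
   for large n.  On the compact space M, g is uniformly continuous, so along
   two orbits that stay in a common Bowen ball B_p(x, delta) the values of g
   differ by at most eps and S_p g oscillates by at most p*eps there; and
   |S_n g - S_(n-m) g| <= m * sup|g|, which is small compared to n when
   m_delta(n)/n is.  The first claim is the case m = 0. *)

Section ereal_limits.
Context {R : realType}.
Local Open Scope ereal_scope.

Lemma limn_esup_le_near (u : (\bar R)^nat) (c : \bar R) :
  (\forall n \near \oo, u n <= c) -> limn_esup u <= c.
Proof.
move=> [N _ uc]; rewrite /limn_esup limf_esupE.
apply: le_trans (ereal_inf_lbound _) _; first by exists [set n | (N <= n)%N]; [exists N|].
by apply: ge_ereal_sup => _ [n /= Nn <-]; exact: uc.
Qed.

Lemma limn_esup_lt_near (u : (\bar R)^nat) (c : \bar R) :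
  limn_esup u < c -> \forall n \near \oo, u n < c.
Proof.
rewrite /limn_esup limf_esupE => /ereal_inf_lt[_ [V FV <-]] Vc.
apply: filterS FV => n Vn; apply: le_lt_trans Vc.
by apply: ereal_sup_ubound; exists n.
Qed.

Context {T : Type} {F : set_system T} {FF : Filter F}.

Lemma cvge0_lt {f : T -> \bar R} {e : R} :
  f @ F --> 0 -> (0 < e)%R -> \forall x \near F, f x < e%:E.
Proof.
move=> /fine_cvgP[ffin /cvgr_lt fe] e0.
by apply: filterS2 ffin (fe e e0) => x fx; rewrite -(fineK fx) lte_fin.
Qed.

Lemma near_le_cvge0 (f : T -> \bar R) :
  (forall e : R, (0 < e)%R -> \forall x \near F, 0 <= f x <= e%:E) ->
  f @ F --> 0.
Proof.
move=> fe; have fin : \forall x \near F, f x \is a fin_num.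
  apply: filterS (fe 1%R ltr01) => x /andP[f0 f1].
  by rewrite ge0_fin_numE// (le_lt_trans f1)// ltry.
apply/fine_cvgP; split => //; apply/cvgrPdist_le => e e0.
apply: filterS2 fin (fe e e0) => x fx /andP[f0 fe'] /=.
by rewrite sub0r normrN ger0_norm ?fine_ge0// -lee_fin fineK.
Qed.

End ereal_limits.

Section birkhoff_sums.
Context {R : realType} {T : Type} {phi : T -> T}.

Lemma birkhoff_sub_le (g : T -> R) (C : R) j n x :
  (j <= n)%N -> (forall y, `|g y| <= C) ->
  `|birkhoff phi n g x - birkhoff phi j g x| <= (n - j)%:R * C.
Proof.
move=> jn gC; rewrite /birkhoff -!(big_mkord xpredT (fun k => g (iter k phi x))).
rewrite (big_cat_nat (leq0n j) jn) /= addrC addrK.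
apply: le_trans (ler_norm_sum _ _ _) _.
apply: le_trans (ler_sum _ (fun i _ => gC (iter i phi x))) _.
by rewrite sumr_const_nat mulr_natl.
Qed.

Lemma birkhoff_dist_le (g : T -> R) (w : R) p y z :
  (forall k, (k < p)%N -> `|g (iter k phi y) - g (iter k phi z)| <= w) ->
  `|birkhoff phi p g y - birkhoff phi p g z| <= p%:R * w.
Proof.
move=> gw; rewrite /birkhoff -sumrB.
apply: le_trans (ler_norm_sum _ _ _) _.
apply: le_trans (ler_sum _ (fun (i : 'I_p) _ => gw i (ltn_ord i))) _.
by rewrite sumr_const card_ord mulr_natl.
Qed.

Context {G : nat -> T -> R} {g : T -> R}.

Lemma birkhoff_approx_shift {C a b : R} {j n : nat} {x : T} :
  (j <= n)%N -> (forall y, `|g y| <= C) ->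
  `|G j x - birkhoff phi j g x| <= a -> `|G n x - birkhoff phi n g x| <= b ->
  `|G j x - G n x| <= a + (n - j)%:R * C + b.
Proof.
move=> jn gC Ga Gb.
apply: le_trans (ler_distD (birkhoff phi j g x) _ _) _.
apply: le_trans (lerD (lexx _) (ler_distD (birkhoff phi n g x) _ _)) _.
rewrite (distrC (birkhoff phi j g x)) (distrC _ (G n x)) addrA lerD// lerD//.
exact: birkhoff_sub_le.
Qed.

Lemma birkhoff_approx_dist {w a : R} {p : nat} {y z : T} :
  (forall k, (k < p)%N -> `|g (iter k phi y) - g (iter k phi z)| <= w) ->
  `|G p y - birkhoff phi p g y| <= a -> `|G p z - birkhoff phi p g z| <= a ->
  `|G p y - G p z| <= a + p%:R * w + a.
Proof.
move=> gw Gy Gz.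
apply: le_trans (ler_distD (birkhoff phi p g y) _ _) _.
apply: le_trans (lerD (lexx _) (ler_distD (birkhoff phi p g z) _ _)) _.
rewrite addrA lerD// ?lerD// ?(distrC _ (G p z))//.
exact: birkhoff_dist_le.
Qed.

End birkhoff_sums.

Section metric.
Context {R : realType} {M : pseudoMetricType R} {d : M -> M -> R}.
Hypothesis hd : is_metric_for d.

Lemma bowen_ball_dist {phi : M -> M} {p : nat} {x : M} {delta : R} {y z : M} {k : nat} :
  bowen_ball d phi p x delta y -> bowen_ball d phi p x delta z -> (k < p)%N ->
  d (iter k phi y) (iter k phi z) < 2 * delta.
Proof.
case: hd => _ _ dC dtri _ By Bz kp.
apply: le_lt_trans (dtri _ (iter k phi x) _) _.
have := By k kp; have := Bz k kp; rewrite (dC (iter k phi x)); lra.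
Qed.

Hypothesis hcpt : compact [set: M].

Lemma compact_continuous_bounded (g : M -> R) : continuous g ->
  exists2 C : R, 0 < C & forall x, `|g x| <= C.
Proof.
move=> gc; have /compact_bounded gbnd : compact (g @` [set: M]).
  by apply: continuous_compact => //; exact: continuous_subspaceT.
have [C [C0 gC]] := filter_ex (filterI (nbhs_pinfty_gt (@real0 _)) gbnd).
by exists C => // x; apply: gC; exists x.
Qed.

Lemma compact_uniform_continuous (g : M -> R) (e : R) : continuous g -> 0 < e ->
  exists2 r : R, 0 < r & forall a b, d a b < r -> `|g a - g b| < e.
Proof.
case: hd => _ _ dC dtri dball gc e0.
have near_x (x : M) : \forall a \near x & r \near (0 : R)^'+,
    forall b, d a b < r -> `|g a - g b| < e.
  have : \forall y \near x, `|g x - g y| < e / 2.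
    by apply: cvgr_dist_lt; [exact: gc|rewrite divr_gt0].
  move=> /nbhs_ballP[rho /= rho0 grho].
  have gd y : d x y < rho -> `|g x - g y| < e / 2 by move=> /dball; exact: grho.
  exists ([set a | d x a < rho / 2], [set r | 0 < r < rho / 2]).
    split.
      by apply/nbhs_ballP; exists (rho / 2) => [|y /dball//]; rewrite /= divr_gt0.
    have rho2 : 0 < rho / 2 by rewrite divr_gt0.
    by apply: filterS2 (nbhs_right_gt _) (nbhs_right_lt rho2) => r /= -> ->.
  move=> [a r] [/= xa /andP[_ rrho]] b ab.
  apply: le_lt_trans (ler_distD (g x) _ _) _.
  rewrite distrC (splitr e) ltrD// gd//; first lra.
  by apply: le_lt_trans (dtri _ a _) _; lra.
have [r [r0 gr]] := filter_ex (filterI (nbhs_right_gt 0)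
  ((compact_near_coveringP _).1 hcpt R _ _ _ (fun x _ => near_x x))).
by exists r => // a b; exact: gr.
Qed.

End metric.

Section sup_bounds.
Context {R : realType}.
Local Open Scope ereal_scope.

Lemma supnorm_ge0 (T : Type) (F : T -> R) (x0 : T) : 0 <= supnorm F.
Proof.
by apply: le_trans (_ : (`|F x0|)%:E <= _) => //; apply: ereal_sup_ubound; exists x0.
Qed.

Lemma scaled_supnorm_leP (T : Type) (F : T -> R) (a c : R) : (0 < a)%R ->
  (a^-1)%:E * supnorm F <= c%:E <-> forall x, (`|F x| <= a * c)%R.
Proof.
move=> a0; rewrite lee_pdivrMl// -EFinM; split => [Fac x|Fac].
  by rewrite -lee_fin; apply: le_trans Fac; apply: ereal_sup_ubound; exists x.
by apply: ge_ereal_sup => _ [x _ <-]; rewrite lee_fin.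
Qed.

Context {M : Type} {d : M -> M -> R} {phi : M -> M} {G : nat -> M -> R}.

Lemma bowen_osc_le n p delta (c : R) : (0 < n)%N ->
  (forall x y z, bowen_ball d phi p x delta y -> bowen_ball d phi p x delta z ->
     (`|G n y - G n z| <= n%:R * c)%R) ->
  bowen_osc d phi G n p delta <= c%:E.
Proof.
move=> n0 Gc; apply: ge_ereal_sup => _ [[y z] [x [By Bz]] <-].
by rewrite lee_fin ler_pdivrMl ?ltr0n//; exact: Gc By Bz.
Qed.

Lemma bowen_osc_ge0 (x0 : M) n p delta : (forall a, d a a = 0%R) -> (0 < delta)%R ->
  0 <= bowen_osc d phi G n p delta.
Proof.
move=> d0 delta0; have x0B : bowen_ball d phi p x0 delta x0 by move=> k _; rewrite d0.
apply: le_trans (_ : (n%:R^-1 * `|G n x0 - G n x0|)%:E <= _).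
  by rewrite subrr normr0 mulr0.
by apply: ereal_sup_ubound; exists (x0, x0) => //; exists x0.
Qed.

End sup_bounds.

Section class_A.
Context {R : realType} {M : pseudoMetricType R} {phi : M -> M} {G : nat -> M -> R}.
Hypothesis hG : class_A phi G.

Lemma class_A_inhabited : inhabited M.
Proof.
case: hG => _ [Gk [_ /fine_cvgP[Gk_fin _]]]; apply: contrapT => M0.
have M_empty : [set: M] = set0 by apply/seteqP; split => // x _; exact: M0 (inhabits x).
have [k /fin_numPlt/andP[+ _]] := filter_ex Gk_fin.
apply/negP; rewrite -leNgt; apply: limn_esup_le_near; near=> n.
rewrite /supnorm M_empty image_set0.
have n0 : (0 < n)%N by near: n; exact: nbhs_infty_gt.
by rewrite ereal_sup0 mulrNy gtr0_sg ?invr_gt0 ?ltr0n// mul1e.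
Unshelve. all: by end_near. Qed.

Lemma class_A_approx (e : R) : 0 < e ->
  exists2 g : M -> R, continuous g &
    \forall n \near \oo, forall x, `|G n x - birkhoff phi n g x| <= n%:R * e.
Proof.
case: hG => _ [Gk [Gkc Gk_cvg]] e0.
have [k /limn_esup_lt_near Gke] := filter_ex (cvge0_lt Gk_cvg e0).
exists (Gk k) => //; apply: filterS2 Gke (nbhs_infty_gt 0) => n Gne n0.
by apply/scaled_supnorm_leP; rewrite ?ltr0n//; exact: ltW.
Qed.

End class_A.

Section approximation_bounds.
Context {R : realType} {M : pseudoMetricType R} {d : M -> M -> R}.
Hypothesis hd : is_metric_for d.
Context {phi : M -> M} {G : nat -> M -> R} {g : M -> R} {C eps delta : R} {N : nat}.
Hypotheses (eps0 : 0 <= eps) (gC : forall x, `|g x| <= C)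
  (G_approx : forall p, (N <= p)%N ->
     forall x, `|G p x - birkhoff phi p g x| <= p%:R * eps)
  (g_unif : forall a b, d a b < 2 * delta -> `|g a - g b| <= eps).

Lemma approx_shift_le {j n : nat} : (N <= j <= n)%N ->
  (n - j)%:R * C <= n%:R * eps -> forall x, `|G j x - G n x| <= 3 * (n%:R * eps).
Proof.
move=> /andP[Nj jn] shiftC x.
have Nn := leq_trans Nj jn.
apply: le_trans (birkhoff_approx_shift jn gC (G_approx j Nj x) (G_approx n Nn x)) _.
have jeps : j%:R * eps <= n%:R * eps by rewrite ler_wpM2r ?ler_nat.
lra.
Qed.

Lemma approx_bowen_osc_le {j n : nat} : (N <= j <= n)%N ->
  (n - j)%:R * C <= n%:R * eps -> forall x y z,
  bowen_ball d phi j x delta y -> bowen_ball d phi j x delta z ->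
  `|G n y - G n z| <= 9 * (n%:R * eps).
Proof.
move=> jn shiftC x y z By Bz.
have shift := approx_shift_le jn shiftC.
have /andP[Nj j_le_n] := jn.
have osc : `|G j y - G j z| <= 3 * (n%:R * eps).
  have g_orbit k : (k < j)%N -> `|g (iter k phi y) - g (iter k phi z)| <= eps.
    by move=> kj; apply/g_unif/(bowen_ball_dist hd By Bz kj).
  apply: le_trans (birkhoff_approx_dist g_orbit (G_approx j Nj y) (G_approx j Nj z)) _.
  have jeps : j%:R * eps <= n%:R * eps by rewrite ler_wpM2r ?ler_nat.
  lra.
apply: le_trans (ler_distD (G j y) _ _) _; rewrite distrC.
apply: le_trans (lerD (shift y) (ler_distD (G j z) _ _)) _.
apply: le_trans (lerD (lexx _) (lerD osc (shift z))) _.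
lra.
Qed.

End approximation_bounds.

Section shifted_bounds.
Context {R : realType} {M : pseudoMetricType R} {d : M -> M -> R}.
Hypotheses (hd : is_metric_for d) (hcpt : compact [set: M]).
Context {phi : M -> M} {G : nat -> M -> R} {m : R -> nat -> nat}.
Hypotheses (hG : class_A phi G)
  (hm_cvg : (fun delta : R => limn_esup (fun n => ((m delta n)%:R / n%:R : R)%:E))
              @ (0:R)^'+ --> 0%E).

Lemma shifted_bounds (e : R) : 0 < e ->
  \forall delta \near (0:R)^'+, \forall n \near \oo,
    (forall x, `|G (n - m delta n) x - G n x| <= n%:R * e) /\
    (forall x y z, bowen_ball d phi (n - m delta n) x delta y ->
       bowen_ball d phi (n - m delta n) x delta z -> `|G n y - G n z| <= n%:R * e).
Proof.
move=> e0; pose eps := e / 9; have eps0 : 0 < eps by rewrite divr_gt0.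
have [g gc [N _ G_approx]] := class_A_approx hG _ eps0.
have [C C0 gC] := compact_continuous_bounded hcpt _ gc.
have [r r0 g_unif] := compact_uniform_continuous hd hcpt _ _ gc eps0.
(* eta bounds m_delta(n)/n: eta <= eps/C makes the shift cost m*C at most n*eps,
   and eta <= 1/2 keeps n - m_delta(n) above N. *)
pose eta := Num.min (eps / C) 2^-1.
have eta0 : 0 < eta by rewrite lt_min invr_gt0 ltr0n andbT divr_gt0.
near=> delta.
have g_delta a b : d a b < 2 * delta -> `|g a - g b| <= eps.
  move=> ab; apply/ltW/g_unif/(lt_trans ab).
  by rewrite mulrC -ltr_pdivlMr//; near: delta; apply: nbhs_right_lt; rewrite divr_gt0.
have hm : (limn_esup (fun n => ((m delta n)%:R / n%:R : R)%:E) < eta%:E)%E.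
  by near: delta; exact: cvge0_lt hm_cvg eta0.
near=> n.
have n0 : (0 < n)%N by near: n; exact: nbhs_infty_gt.
have m_eta : (m delta n)%:R < eta * n%:R.
  by rewrite -ltr_pdivrMr ?ltr0n// -lte_fin; near: n; exact: limn_esup_lt_near.
have mC : (m delta n)%:R * C <= n%:R * eps.
  rewrite -ler_pdivlMr// -mulrA mulrC; apply/ltW/(lt_le_trans m_eta).
  by rewrite ler_wpM2r// ge_min lexx.
have m_half : (m delta n * 2 < n)%N.
  rewrite -(ltr_nat R) natrM -ltr_pdivlMr// (lt_le_trans m_eta)//.
  by rewrite [leRHS]mulrC ler_wpM2r// ge_min lexx orbT.
have Nn : (2 * N <= n)%N by near: n; exact: nbhs_infty_ge.
have jn : (N <= n - m delta n <= n)%N by apply/andP; split; lia.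
have {}mC : (n - (n - m delta n))%:R * C <= n%:R * eps by rewrite subKn//; lia.
have ne : n%:R * e = 9 * (n%:R * eps) by rewrite /eps; field.
rewrite ne; split.
  move=> x; apply: le_trans (approx_shift_le (ltW eps0) gC G_approx jn mC x) _.
  by apply: ler_wpM2r; [rewrite mulr_ge0// ltW|rewrite ler_nat].
apply: (approx_bowen_osc_le hd (ltW eps0) gC G_approx g_delta jn mC).
Unshelve. all: by end_near. Qed.
End shifted_bounds.

Section shifted_limsups.
Context {R : realType} {M : pseudoMetricType R} {d : M -> M -> R}.
Hypotheses (hd : is_metric_for d) (hcpt : compact [set: M]).
Context {phi : M -> M} {G : nat -> M -> R}.
Hypothesis hG : class_A phi G.

Lemma shifted_limsups (m : R -> nat -> nat) :
  (fun delta : R => limn_esup (fun n => ((m delta n)%:R / n%:R : R)%:E))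
    @ (0:R)^'+ --> 0%E ->
  (fun delta : R => limn_esup (fun n =>
     ((n%:R^-1)%:E * supnorm (fun x => G (n - m delta n)%N x - G n x)%R)%E))
    @ (0:R)^'+ --> 0%E /\
  (fun delta : R => limn_esup (fun n => bowen_osc d phi G n (n - m delta n)%N delta))
    @ (0:R)^'+ --> 0%E.
Proof.
move=> hm_cvg; have [x0] := class_A_inhabited hG.
have d0 a : d a a = 0 by case: hd => _ dE _ _ _; exact/dE.
have bounds := shifted_bounds hd hcpt hG hm_cvg.
split; apply: near_le_cvge0 => e e0;
  apply: filterS2 (nbhs_right_gt 0) (bounds e e0) => delta delta0 {}bounds;
  (apply/andP; split; [apply: limf_esup_ge0 => // n|apply: limn_esup_le_near]).
- by apply: mule_ge0; [rewrite lee_fin invr_ge0|exact: supnorm_ge0 x0].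
- apply: filterS2 (nbhs_infty_gt 0) bounds => n n0 [shift _].
  by apply/scaled_supnorm_leP; rewrite ?ltr0n.
- exact: bowen_osc_ge0 x0 _ _ _ d0 delta0.
- apply: filterS2 (nbhs_infty_gt 0) bounds => n n0 [_ osc].
  exact: bowen_osc_le.
Qed.

End shifted_limsups.

Theorem lemma2p4 (R : realType) (M : pseudoMetricType R) (d : M -> M -> R)
  (hd : is_metric_for d) (hcpt : compact [set: M])
  (phi : M -> M) (hphi : continuous phi) (G : nat -> M -> R)
  (hG : class_A phi G) :
  (fun delta : R => limn_esup (fun n : nat => bowen_osc d phi G n n delta))
     @ (0:R)^'+ --> 0%E /\
  forall m : R -> nat -> nat,
    (forall delta : R, 0 < delta -> forall n : nat, (0 < n)%N -> (m delta n < n)%N) ->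
    (fun delta : R => limn_esup (fun n : nat => ((m delta n)%:R / n%:R : R)%:E))
       @ (0:R)^'+ --> 0%E ->
    (fun delta : R => limn_esup (fun n : nat =>
        ((n%:R^-1)%:E * supnorm (fun x => G (n - m delta n)%N x - G n x)%R)%E))
       @ (0:R)^'+ --> 0%E /\
    (fun delta : R => limn_esup (fun n : nat =>
        bowen_osc d phi G n (n - m delta n)%N delta))
       @ (0:R)^'+ --> 0%E.
Proof.
split=> [|m _ hm_cvg]; last apply: (shifted_limsups hd hcpt hG m hm_cvg).
have zero_cvg :
    (fun delta : R => limn_esup (fun n : nat => ((0%N)%:R / n%:R : R)%:E)) @ 0^'+ --> 0%E.
  apply: near_le_cvge0 => e e0; apply: nearW => delta.
  apply/andP; split.
    by apply: limf_esup_ge0 => // n; rewrite mul0r.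
  by apply: limn_esup_le_near; apply: nearW => n; rewrite mul0r lee_fin ltW.
have [_] := shifted_limsups hd hcpt hG _ zero_cvg.
by under eq_fun do under eq_fun do rewrite subn0.
Qed.
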